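(* There is an absolute constant $K$ such that for all real random variables $X,Y$ with bounded ranges (not necessarily independent) and all $n\in\mathbb{N}$, $$H_n(X-Y)\le 3H_n(X+Y)+4H_n(X)+4H_n(Y)-5H_n(X,Y)+K.$$
   Context: Logarithms base 2. $D_n(x)=\lfloor 2^nx\rfloor/2^n$ coordinatewise. For bounded random variables, $H_n(Z):=H(D_n(Z))$ and $H_n(X,Y):=H(D_n(X),D_n(Y))$, where $H$ is Shannon entropy of a discrete random variable. *)

From HB Require Import structures.
From mathcomp Require Import all_boot all_order all_algebra.
From mathcomp Require Import all_classical all_reals all_analysis.
Set Implicit Arguments. Unset Strict Implicit. Unset Printing Implicit Defensive.
Import Order.TTheory GRing.Theory Num.Theory.
Local Open Scope classical_set_scope.
Local Open Scope ring_scope.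

Definition log2 {R : realType} (x : R) : R := ln x / ln 2.

Definition dyadic {R : realType} (n : nat) (x : R) : R :=
  (Num.floor (2 ^+ n * x))%:~R / 2 ^+ n.

Definition pmf {R : realType} {d} {T : measurableType d} {V : Type}
  (P : probability T R) (Z : T -> V) (v : V) : R :=
  fine (P (Z @^-1` [set v])).

Definition entropy {R : realType} {d} {T : measurableType d} {V : choiceType}
  (P : probability T R) (Z : T -> V) : R :=
  - \sum_(v \in range Z) (pmf P Z v * log2 (pmf P Z v)).

Definition Hn {R : realType} {d} {T : measurableType d}
  (P : probability T R) (n : nat) (Z : T -> R) : R :=
  entropy P (fun t => dyadic n (Z t)).

Definition Hn2 {R : realType} {d} {T : measurableType d}
  (P : probability T R) (n : nat) (X Y : T -> R) : R :=
  entropy P (fun t => (dyadic n (X t), dyadic n (Y t))).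

(* Rounding costs only a bounded number of bits: D_n(X - Y) equals D_n X - D_n Y up to a carry
   taking two values, and similarly for the sum, so it suffices to prove
   H(A - B) <= 3 H(A + B) + 4 H(A) + 4 H(B) - 5 H(A, B) for finitely valued A, B.
   Let B1, B2 be copies of B, conditionally independent given A; then
   H(A, B1, B2) = 2 H(A, B) - H(A).  Submodularity applied to the pairs
   ((A + B2, B1 + B2), (A, B1)), ((B1, A + B2), (B2, A + B1)) and ((B1 + B2, A), (B1, B2)),
   whose common functions are A - B1, A + B1 + B2 and B1 + B2, bounds H(A, B1, B2) three times;
   adding the three bounds gives the inequality. *)

From Pilot Require Import Defs.
From HB Require Import structures.
From mathcomp Require Import all_boot all_order all_algebra.
From mathcomp Require Import all_classical all_reals all_analysis.
From mathcomp Require Import ring lra zify.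
Set Implicit Arguments. Unset Strict Implicit. Unset Printing Implicit Defensive.
Import Order.TTheory GRing.Theory Num.Theory.
Local Open Scope classical_set_scope.
Local Open Scope ring_scope.

Lemma ln_le_subr1 (R : realType) (r : R) : 0 < r -> ln r <= r - 1.
Proof. by move=> r0; have := @le_ln1Dx R (r - 1); rewrite [1 + _]addrC subrK; apply; lra. Qed.

Section FiniteEntropy.
Variables (R : realType) (O : finType) (w : O -> R).
Hypotheses (w_ge0 : forall o, 0 <= w o) (w_sum1 : \sum_o w o = 1).

Definition mass {V : eqType} (F : O -> V) (v : V) : R := \sum_o (F o == v)%:R * w o.

(* In nats, whereas [entropy] is in bits. *)
Definition ent {V : eqType} (F : O -> V) : R := - \sum_o w o * ln (mass F (F o)).

Lemma weight_gt0 o : w o != 0 -> 0 < w o.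
Proof. by move=> h; rewrite lt_neqAle eq_sym h w_ge0. Qed.

Lemma mass_ge0 (V : eqType) (F : O -> V) v : 0 <= mass F v.
Proof. by apply: sumr_ge0 => o _; rewrite mulr_ge0 ?ler0n. Qed.

Lemma mass_ge_weight (V : eqType) (F : O -> V) o : w o <= mass F (F o).
Proof.
rewrite /mass (bigD1 o) //= eqxx mul1r lerDl.
by apply: sumr_ge0 => o' _; rewrite mulr_ge0 ?ler0n.
Qed.

Lemma mass_gt0 (V : eqType) (F : O -> V) o : 0 < w o -> 0 < mass F (F o).
Proof. by move=> wo; apply: lt_le_trans wo (mass_ge_weight F o). Qed.

Lemma gibbs_inequality (r : O -> R) : (forall o, 0 < w o -> 0 < r o) ->
  \sum_o w o * ln (r o) <= \sum_o w o * r o - 1.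
Proof.
move=> r_gt0; rewrite -w_sum1 -sumrB; apply: ler_sum => o _.
have [->|/weight_gt0 wo] := eqVneq (w o) 0; first by rewrite !mul0r subrr.
rewrite -[X in _ <= _ - X]mulr1 -mulrBr ler_wpM2l ?w_ge0 //.
exact: ln_le_subr1 (r_gt0 o wo).
Qed.

Lemma ent_le_comp (V1 V2 : eqType) (F : O -> V1) (G : O -> V2) (f : V2 -> V1) :
  (forall o, 0 < w o -> F o = f (G o)) -> ent F <= ent G.
Proof.
move=> FE; rewrite /ent lerN2; apply: ler_sum => o _.
have [->|/weight_gt0 wo] := eqVneq (w o) 0; first by rewrite !mul0r.
rewrite ler_wpM2l ?w_ge0 // ler_ln ?posrE ?mass_gt0 //.
apply: ler_sum => o' _.
have [->|/weight_gt0 wo'] := eqVneq (w o') 0; first by rewrite !mulr0.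
case: eqP => [GE|_]; last by rewrite mul0r mulr_ge0 ?ler0n.
by rewrite FE // FE // GE eqxx.
Qed.

Lemma eq_ent (V : eqType) (F G : O -> V) :
  (forall o, 0 < w o -> F o = G o) -> ent F = ent G.
Proof.
move=> FG; apply/eqP; rewrite eq_le.
by rewrite (@ent_le_comp _ _ _ _ id) // (@ent_le_comp _ _ _ _ id) // => o /FG.
Qed.

Lemma ent_cst : ent (fun _ => tt) = 0.
Proof.
have mass1 : mass (fun _ => tt) tt = 1.
  by rewrite /mass -[RHS]w_sum1; apply: eq_bigr => o _; rewrite mul1r.
by rewrite /ent big1 ?oppr0 // => o _; rewrite mass1 ln1 mulr0.
Qed.

Lemma ent_bool_le (F : O -> bool) : ent F <= ln 2.
Proof.
pose r o := (2 * mass F (F o))^-1.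
have r_gt0 o : 0 < w o -> 0 < r o by move=> wo; rewrite invr_gt0 mulr_gt0 ?mass_gt0.
have lnr : \sum_o w o * ln (r o) = ent F - ln 2.
  rewrite /ent -[ln 2]mulr1 -[X in ln 2 * X]w_sum1 mulr_sumr -sumrN -sumrB.
  apply: eq_bigr => o _.
  have [->|/weight_gt0 wo] := eqVneq (w o) 0; first by rewrite !(mul0r, mulr0) subr0 oppr0.
  rewrite lnV ?posrE ?mulr_gt0 ?mass_gt0 // lnM ?posrE ?mass_gt0 //; ring.
have sum_r : \sum_o w o * r o <= 1.
  have class_sum (b : bool) : \sum_(o | F o == b) w o * r o = 2^-1 * (mass F b / mass F b).
    transitivity (\sum_(o | F o == b) w o * (2 * mass F b)^-1).
      by apply: eq_bigr => o /eqP <-.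
    rewrite -mulr_suml; have -> : \sum_(o | F o == b) w o = mass F b.
      by rewrite /mass big_mkcond; apply: eq_bigr => o _; case: eqP; rewrite ?mul1r ?mul0r.
    by rewrite invfM; ring.
  rewrite (bigID (fun o => F o == true)) /=.
  rewrite [X in _ + X](eq_bigl (fun o => F o == false)); last by move=> o; case: (F o).
  rewrite !class_sum.
  have div_le1 (x : R) : x / x <= 1.
    by have [->|x0] := eqVneq x 0; rewrite ?mulr0 ?ler01 // divff.
  have := div_le1 (mass F true); have := div_le1 (mass F false); lra.
have := gibbs_inequality r_gt0; lra.
Qed.

Section Submodularity.
Variables (V1 V2 V3 : eqType) (F : O -> V1) (G : O -> V2) (C : O -> V3).
Variables (c1 : V1 -> V3) (c2 : V2 -> V3).
Hypotheses (CF : forall o, C o = c1 (F o)) (CG : forall o, C o = c2 (G o)).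

Let FG o := (F o, G o).

Lemma fiber_sum_le o1 o2 :
  \sum_o (F o1 == F o)%:R * (G o2 == G o)%:R * (w o / (mass FG (FG o) * mass C (C o)))
  <= (C o1 == C o2)%:R / mass C (C o1).
Proof.
have [Ce|Cne] := eqVneq (C o1) (C o2); last first.
  rewrite big1 ?mul0r // => o _.
  case: eqP => [E1|]; last by rewrite !mul0r.
  case: eqP => [E2|]; last by rewrite mulr0 mul0r.
  by move: Cne; rewrite CF E1 CG E2 -CF -CG eqxx.
set q := mass FG (F o1, G o2); set p := mass C (C o1).
have -> : \sum_o (F o1 == F o)%:R * (G o2 == G o)%:R *
     (w o / (mass FG (FG o) * mass C (C o)))
   = (\sum_o (F o1 == F o)%:R * (G o2 == G o)%:R * w o) / (q * p).
  rewrite mulr_suml; apply: eq_bigr => o _.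
  case: eqP => [E1|]; last by rewrite !mul0r.
  case: eqP => [E2|]; last by rewrite mulr0 !mul0r.
  by rewrite /q /p /FG -E1 -E2 CF -E1 -CF mulrA.
have -> : \sum_o (F o1 == F o)%:R * (G o2 == G o)%:R * w o = q.
  rewrite /q /mass; apply: eq_bigr => o _.
  rewrite xpair_eqE (eq_sym (F o)) (eq_sym (G o)).
  by case: (F o1 == F o); case: (G o2 == G o); rewrite /= ?mul1r ?mul0r.
have [->|qn0] := eqVneq q 0; first by rewrite mul0r divr_ge0 ?ler0n ?mass_ge0.
by rewrite invfM mulrA mulfV // mul1r.
Qed.

Lemma ent_submod : ent FG + ent C <= ent F + ent G.
Proof.
pose r o := mass F (F o) * mass G (G o) / (mass FG (FG o) * mass C (C o)).
have r_gt0 o : 0 < w o -> 0 < r o.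
  by move=> wo; rewrite /r divr_gt0 // mulr_gt0 // mass_gt0.
have lnr : \sum_o w o * ln (r o) = ent FG + ent C - (ent F + ent G).
  have -> : \sum_o w o * ln (r o) = \sum_o (w o * ln (mass F (F o))
      + w o * ln (mass G (G o)) - w o * ln (mass FG (FG o)) - w o * ln (mass C (C o))).
    apply: eq_bigr => o _.
    have [->|/weight_gt0 wo] := eqVneq (w o) 0; first by rewrite !mul0r !subr0 addr0.
    have := mass_gt0 F wo; have := mass_gt0 G wo.
    have := mass_gt0 FG wo; have := mass_gt0 C wo => m1 m2 m3 m4.
    rewrite /r ln_div ?posrE ?mulr_gt0 // !lnM ?posrE //; ring.
  rewrite /ent !sumrB big_split /=; lra.
have sum_r : \sum_o w o * r o <= 1.
  pose D o := w o / (mass FG (FG o) * mass C (C o)).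
  have -> : \sum_o w o * r o = \sum_o1 \sum_o2 (w o1 * w o2) *
      \sum_o (F o1 == F o)%:R * (G o2 == G o)%:R * D o.
    have -> : \sum_o w o * r o = \sum_o \sum_o1 \sum_o2
        ((F o1 == F o)%:R * w o1) * ((G o2 == G o)%:R * w o2) * D o.
      apply: eq_bigr => o _.
      transitivity ((mass F (F o) * mass G (G o)) * D o); first by rewrite /r /D; ring.
      rewrite /mass !mulr_suml; apply: eq_bigr => o1 _.
      rewrite mulr_sumr mulr_suml; apply: eq_bigr => o2 _; ring.
    rewrite exchange_big; apply: eq_bigr => o1 _.
    rewrite exchange_big; apply: eq_bigr => o2 _.
    rewrite mulr_sumr; apply: eq_bigr => o _; ring.
  apply: (@le_trans _ _ (\sum_o1 \sum_o2 (w o1 * w o2) *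
      ((C o1 == C o2)%:R / mass C (C o1)))).
    apply: ler_sum => o1 _; apply: ler_sum => o2 _.
    by rewrite ler_wpM2l ?mulr_ge0 ?fiber_sum_le.
  rewrite -[X in _ <= X]w_sum1; apply: ler_sum => o1 _.
  have -> : \sum_o2 w o1 * w o2 * ((C o1 == C o2)%:R / mass C (C o1))
      = w o1 / mass C (C o1) * mass C (C o1).
    rewrite /mass mulr_sumr; apply: eq_bigr => o2 _; rewrite (eq_sym (C o2)); ring.
  have [->|mn0] := eqVneq (mass C (C o1)) 0; first by rewrite mulr0.
  by rewrite divfK.
have := gibbs_inequality r_gt0; lra.
Qed.
End Submodularity.

Lemma ent_subadd (V1 V2 : eqType) (F : O -> V1) (G : O -> V2) :
  ent (fun o => (F o, G o)) <= ent F + ent G.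
Proof.
have := @ent_submod _ _ _ F G (fun _ => tt) (fun _ => tt) (fun _ => tt)
  (fun _ => erefl) (fun _ => erefl).
by rewrite ent_cst addr0.
Qed.
End FiniteEntropy.

(* Two copies [p.1], [p.2] of the sample, conditionally independent given [X]. *)
Section Coupling.
Variables (R : realType) (O : finType) (w : O -> R).
Hypotheses (w_ge0 : forall o, 0 <= w o) (w_sum1 : \sum_o w o = 1).
Variables (V : eqType) (X : O -> V).

Definition couple (p : O * O) : R :=
  w p.1 * w p.2 * (X p.1 == X p.2)%:R / mass w X (X p.1).

Lemma couple_ge0 p : 0 <= couple p.
Proof. by rewrite /couple divr_ge0 ?mulr_ge0 ?ler0n ?mass_ge0. Qed.

Lemma weight_divfK o : w o / mass w X (X o) * mass w X (X o) = w o.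
Proof.
have [m0|mn0] := eqVneq (mass w X (X o)) 0; last by rewrite divfK.
have := mass_ge_weight w_ge0 X o; rewrite m0 => wo_le0.
have -> : w o = 0 by apply/eqP; rewrite eq_le wo_le0 w_ge0.
by rewrite !mul0r.
Qed.

Lemma couple_marg_fst o1 : \sum_o2 couple (o1, o2) = w o1.
Proof.
rewrite -[RHS]weight_divfK /mass mulr_sumr; apply: eq_bigr => o2 _.
by rewrite /couple /= eq_sym; ring.
Qed.

Lemma couple_marg_snd o2 : \sum_o1 couple (o1, o2) = w o2.
Proof.
rewrite -[RHS]weight_divfK /mass mulr_sumr; apply: eq_bigr => o1 _.
rewrite /couple /=; case: eqP => [->|_]; last by rewrite !(mulr0, mul0r).
ring.
Qed.

Lemma sum_couple_fst (h : O -> R) : \sum_p couple p * h p.1 = \sum_o w o * h o.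
Proof.
rewrite -(pair_bigA _ (fun i j => couple (i, j) * h i)).
by apply: eq_bigr => o1 _; rewrite -mulr_suml couple_marg_fst.
Qed.

Lemma sum_couple_snd (h : O -> R) : \sum_p couple p * h p.2 = \sum_o w o * h o.
Proof.
rewrite -(pair_bigA _ (fun i j => couple (i, j) * h j)) exchange_big.
by apply: eq_bigr => o2 _; rewrite -mulr_suml couple_marg_snd.
Qed.

Lemma couple_sum1 : \sum_p couple p = 1.
Proof.
rewrite -w_sum1; have := sum_couple_fst (fun _ => 1).
by under eq_bigr do rewrite mulr1; under [X in _ = X -> _]eq_bigr do rewrite mulr1.
Qed.

Lemma ent_couple_fst (V' : eqType) (F : O -> V') : ent couple (fun p => F p.1) = ent w F.
Proof.
have mass_fst v : mass couple (fun p => F p.1) v = mass w F v.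
  rewrite /mass; under eq_bigr do rewrite mulrC.
  by rewrite (sum_couple_fst (fun o => (F o == v)%:R)); under eq_bigr do rewrite mulrC.
rewrite /ent; under eq_bigr do rewrite mass_fst.
by rewrite (sum_couple_fst (fun o => ln (mass w F (F o)))).
Qed.

Lemma ent_couple_snd (V' : eqType) (F : O -> V') : ent couple (fun p => F p.2) = ent w F.
Proof.
have mass_snd v : mass couple (fun p => F p.2) v = mass w F v.
  rewrite /mass; under eq_bigr do rewrite mulrC.
  by rewrite (sum_couple_snd (fun o => (F o == v)%:R)); under eq_bigr do rewrite mulrC.
rewrite /ent; under eq_bigr do rewrite mass_snd.
by rewrite (sum_couple_snd (fun o => ln (mass w F (F o)))).
Qed.

Lemma couple_supp p : 0 < couple p -> X p.1 = X p.2.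
Proof. by rewrite /couple; case: eqP => // _; rewrite mulr0 mul0r ltxx. Qed.

Lemma couple_gt0_fst p : 0 < couple p -> 0 < w p.1.
Proof.
move=> cp; rewrite lt_neqAle w_ge0 andbT; apply/eqP => w0.
by move: cp; rewrite /couple -w0 !mul0r ltxx.
Qed.

Lemma couple_gt0_snd p : 0 < couple p -> 0 < w p.2.
Proof.
move=> cp; rewrite lt_neqAle w_ge0 andbT; apply/eqP => w0.
by move: cp; rewrite /couple -w0 mulr0 !mul0r ltxx.
Qed.

Lemma mass_couple_triple (V' : eqType) (Y : O -> V') p : 0 < couple p ->
  mass couple (fun q => (X q.1, Y q.1, Y q.2)) (X p.1, Y p.1, Y p.2) =
  mass w (fun o => (X o, Y o)) (X p.1, Y p.1) * mass w (fun o => (X o, Y o)) (X p.2, Y p.2)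
    / mass w X (X p.1).
Proof.
move=> /couple_supp Xp; rewrite /mass.
rewrite -(pair_bigA _ (fun i j => ((X i, Y i, Y j) == (X p.1, Y p.1, Y p.2))%:R * couple (i, j))).
rewrite !mulr_suml; apply: eq_bigr => o1 _.
rewrite mulr_sumr mulr_suml; apply: eq_bigr => o2 _.
rewrite /couple /= !xpair_eqE.
case: (X o1 =P X p.1) => [->|_] /=; last by rewrite !(mul0r, mulr0).
case: (Y o1 =P Y p.1) => [_|_] /=; last by rewrite !(mul0r, mulr0).
case: (Y o2 =P Y p.2) => [_|_] /=; last by rewrite !(mul0r, mulr0, andbF).
by rewrite andbT Xp (eq_sym (X p.2)) /mass; ring.
Qed.

Lemma ent_couple_triple (V' : eqType) (Y : O -> V') :
  ent couple (fun q => (X q.1, Y q.1, Y q.2)) = 2 * ent w (fun o => (X o, Y o)) - ent w X.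
Proof.
set XY := fun o => (X o, Y o); rewrite /ent.
have -> : \sum_p couple p * ln (mass couple (fun q => (X q.1, Y q.1, Y q.2)) (X p.1, Y p.1, Y p.2))
  = \sum_p (couple p * ln (mass w XY (XY p.1)) + couple p * ln (mass w XY (XY p.2))
     - couple p * ln (mass w X (X p.1))).
  apply: eq_bigr => p _.
  have [->|cn0] := eqVneq (couple p) 0; first by rewrite !mul0r; ring.
  have cp : 0 < couple p by rewrite lt_neqAle eq_sym cn0 couple_ge0.
  have := mass_gt0 w_ge0 XY (couple_gt0_fst cp); have := mass_gt0 w_ge0 XY (couple_gt0_snd cp).
  have := mass_gt0 w_ge0 X (couple_gt0_fst cp) => m1 m2 m3.
  rewrite mass_couple_triple // ln_div ?posrE ?mulr_gt0 // lnM ?posrE //; ring.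
rewrite sumrB big_split /= (sum_couple_fst (fun o => ln (mass w XY (XY o)))).
rewrite (sum_couple_snd (fun o => ln (mass w XY (XY o)))).
rewrite (sum_couple_fst (fun o => ln (mass w X (X o)))); ring.
Qed.
End Coupling.

Section SumDifference.
Variables (R : realType) (O : finType) (w : O -> R).
Hypotheses (w_ge0 : forall o, 0 <= w o) (w_sum1 : \sum_o w o = 1).
Variables (V : zmodType) (A B : O -> V).

Let W := couple w A.
Let W_ge0 : forall p, 0 <= W p := couple_ge0 w_ge0 A.
Let W_sum1 : \sum_p W p = 1 := couple_sum1 w_ge0 w_sum1 A.
Let T p := (A p.1, B p.1, B p.2).

Lemma ent_couple_add_snd : ent W (fun p => A p.1 + B p.2) = ent w (fun o => A o + B o).
Proof.
rewrite -(ent_couple_snd w_ge0 A (fun o => A o + B o)).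
by apply: eq_ent => // p /couple_supp ->.
Qed.

Lemma ent_triple_diff_le :
  ent W T + ent w (fun o => A o - B o)
  <= ent w (fun o => A o + B o) + ent W (fun p => B p.1 + B p.2) + ent w (fun o => (A o, B o)).
Proof.
have := @ent_submod _ _ W W_ge0 W_sum1 _ _ _ (fun p => (A p.1 + B p.2, B p.1 + B p.2))
  (fun p => (A p.1, B p.1)) (fun p => A p.1 - B p.1)
  (fun u => u.1 - u.2) (fun u => u.1 - u.2) ltac:(by move=> p /=; rewrite [B p.1 + _]addrC addrKA)
  (fun _ => erefl).
have T_le : ent W T <= ent W (fun p => ((A p.1 + B p.2, B p.1 + B p.2), (A p.1, B p.1))).
  apply: (ent_le_comp W_ge0 (f := fun u : (V * V) * (V * V) => (u.2.1, u.2.2, u.1.2 - u.2.2))).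
  by move=> p _ /=; rewrite addrC addKr.
have := ent_subadd W_ge0 W_sum1 (fun p => A p.1 + B p.2) (fun p => B p.1 + B p.2).
rewrite ent_couple_add_snd (ent_couple_fst w_ge0 A (fun o => A o - B o)).
rewrite (ent_couple_fst w_ge0 A (fun o => (A o, B o))); lra.
Qed.

Lemma ent_triple_sum3_le :
  ent W T + ent W (fun p => A p.1 + B p.1 + B p.2)
  <= 2 * ent w B + 2 * ent w (fun o => A o + B o).
Proof.
have := @ent_submod _ _ W W_ge0 W_sum1 _ _ _ (fun p => (B p.1, A p.1 + B p.2))
  (fun p => (B p.2, A p.1 + B p.1)) (fun p => A p.1 + B p.1 + B p.2)
  (fun u => u.1 + u.2) (fun u => u.1 + u.2)
  ltac:(by move=> p /=; rewrite addrCA addrA)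
  ltac:(by move=> p /=; rewrite addrC).
have T_le : ent W T <= ent W (fun p => ((B p.1, A p.1 + B p.2), (B p.2, A p.1 + B p.1))).
  apply: (ent_le_comp W_ge0 (f := fun u : (V * V) * (V * V) => (u.1.2 - u.2.1, u.1.1, u.2.1))).
  by move=> p _ /=; rewrite addrK.
have := ent_subadd W_ge0 W_sum1 (fun p => B p.1) (fun p => A p.1 + B p.2).
have := ent_subadd W_ge0 W_sum1 (fun p => B p.2) (fun p => A p.1 + B p.1).
rewrite ent_couple_add_snd (ent_couple_fst w_ge0 A (fun o => A o + B o)).
rewrite (ent_couple_fst w_ge0 A B) (ent_couple_snd w_ge0 A B); lra.
Qed.

Lemma ent_triple_addB_le :
  ent W T + ent W (fun p => B p.1 + B p.2)
  <= ent W (fun p => A p.1 + B p.1 + B p.2) + ent w A + 2 * ent w B.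
Proof.
have := @ent_submod _ _ W W_ge0 W_sum1 _ _ _ (fun p => (B p.1 + B p.2, A p.1))
  (fun p => (B p.1, B p.2)) (fun p => B p.1 + B p.2)
  (fun u => u.1) (fun u => u.1 + u.2) (fun _ => erefl) (fun _ => erefl).
have T_le : ent W T <= ent W (fun p => ((B p.1 + B p.2, A p.1), (B p.1, B p.2))).
  exact: (ent_le_comp W_ge0 (f := fun u : (V * V) * (V * V) => (u.1.2, u.2.1, u.2.2))).
have BA_le : ent W (fun p => (B p.1 + B p.2, A p.1))
    <= ent W (fun p => (A p.1 + B p.1 + B p.2, A p.1)).
  apply: (ent_le_comp W_ge0 (f := fun u : V * V => (u.1 - u.2, u.2))).
  by move=> p _ /=; rewrite -(addrA (A p.1)) [_ - A p.1]addrC addKr.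
have := ent_subadd W_ge0 W_sum1 (fun p => A p.1 + B p.1 + B p.2) (fun p => A p.1).
have := ent_subadd W_ge0 W_sum1 (fun p => B p.1) (fun p => B p.2).
rewrite (ent_couple_fst w_ge0 A A) (ent_couple_fst w_ge0 A B) (ent_couple_snd w_ge0 A B); lra.
Qed.

Lemma ent_diff_le :
  ent w (fun o => A o - B o) <= 3 * ent w (fun o => A o + B o) + 4 * ent w A
    + 4 * ent w B - 5 * ent w (fun o => (A o, B o)).
Proof.
have := ent_couple_triple w_ge0 A B.
have := ent_triple_diff_le; have := ent_triple_sum3_le; have := ent_triple_addB_le.
rewrite /W /T; lra.
Qed.
End SumDifference.

(* The carries [D - (A - B)] and [S - (A + B)] take at most two values, so they cost at most
   [ln 2] once on the left and three times on the right. *)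
Lemma ent_diff_le_carry (R : realType) (O : finType) (w : O -> R) (V : zmodType)
    (A B S D : O -> V) (c : V) :
  (forall o, 0 <= w o) -> \sum_o w o = 1 ->
  (forall o, D o = A o - B o \/ D o = A o - B o - c) ->
  (forall o, S o = A o + B o \/ S o = A o + B o + c) ->
  ent w D <= 3 * ent w S + 4 * ent w A + 4 * ent w B
             - 5 * ent w (fun o => (A o, B o)) + 4 * ln 2.
Proof.
move=> w_ge0 w_sum1 DE SE.
have D_le : ent w D <= ent w (fun o => (A o - B o, D o == A o - B o)).
  apply: (ent_le_comp w_ge0 (f := fun u : V * bool => if u.2 then u.1 else u.1 - c)).
  by move=> o _ /=; case: eqP => // ne; case: (DE o).
have AB_le : ent w (fun o => A o + B o) <= ent w (fun o => (S o, S o == A o + B o)).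
  apply: (ent_le_comp w_ge0 (f := fun u : V * bool => if u.2 then u.1 else u.1 - c)).
  by move=> o _ /=; case: eqP => [->//|ne]; case: (SE o) => // ->; rewrite addrK.
have := ent_subadd w_ge0 w_sum1 (fun o => A o - B o) (fun o => D o == A o - B o).
have := ent_bool_le w_ge0 w_sum1 (fun o => D o == A o - B o).
have := ent_subadd w_ge0 w_sum1 S (fun o => S o == A o + B o).
have := ent_bool_le w_ge0 w_sum1 (fun o => S o == A o + B o).
have := ent_diff_le w_ge0 w_sum1 A B.
lra.
Qed.

Section FiniteTransfer.
Variables (R : realType) (d : measure_display) (T : measurableType d) (P : probability T R).
Variables (U : choiceType) (W : T -> U) (S : seq U).
Hypotheses (S_uniq : uniq S) (rangeW : range W = [set` S])
  (W_fiber : forall u, measurable (W @^-1` [set u])).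

Definition pmf_weight (o : 'I_(size S)) : R := Defs.pmf P W (tnth (in_tuple S) o).

Lemma pmf_weight_ge0 o : 0 <= pmf_weight o.
Proof. by rewrite /pmf_weight /Defs.pmf fine_ge0. Qed.

Lemma pmf_comp (V : eqType) (g : U -> V) v :
  Defs.pmf P (g \o W) v = mass pmf_weight (fun o => g (tnth (in_tuple S) o)) v.
Proof.
have W_in t : W t \in S.
  have : range W (W t) by exists t.
  by rewrite rangeW.
have fiber_cover : (g \o W) @^-1` [set v] =
    \big[setU/set0]_(o < size S | g (tnth (in_tuple S) o) == v) (W @^-1` [set tnth (in_tuple S) o]).
  rewrite -bigcup_seq_cond; apply/seteqP; split => t /=.
  - move=> gWt; exists (Ordinal (etrans (index_mem (W t) S) (W_in t))).
      by rewrite /= mem_index_enum (tnth_nth (W t)) /= nth_index // gWt eqxx.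
    by rewrite /= (tnth_nth (W t)) /= nth_index.
  - by move=> [i /andP[_ /eqP <-] /= <-].
rewrite /Defs.pmf fiber_cover measure_bigsetU_ord_cond //.
- rewrite (eq_bigr (fun o => (pmf_weight o)%:E)); last first.
    by move=> o _; rewrite /pmf_weight /Defs.pmf fineK // fin_num_measure.
  rewrite sumEFin /= /mass big_mkcond /=.
  by apply: eq_bigr => o _; rewrite eq_sym; case: eqP; rewrite ?mul1r ?mul0r.
- move=> i j _ _ [t [/= ti tj]]; apply/val_inj/eqP.
  by rewrite -(nth_uniq (W t) _ _ S_uniq) ?ltn_ord // -!(tnth_nth (W t) (in_tuple S)) -ti -tj.
Qed.

Lemma pmf_weight_sum1 : \sum_o pmf_weight o = 1.
Proof.
have := pmf_comp (fun _ => tt) tt.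
rewrite /Defs.pmf /mass preimage_cst /= ifT ?inE // probability_setT /= => ->.
by apply: eq_bigr => o _; rewrite mul1r.
Qed.

Lemma entropy_comp (V : choiceType) (g : U -> V) :
  entropy P (g \o W) = ent pmf_weight (fun o => g (tnth (in_tuple S) o)) / ln 2.
Proof.
set G := fun o => g (tnth (in_tuple S) o).
have G_range o : range (g \o W) (G o).
  have : [set` S] (tnth (in_tuple S) o) by exact: mem_tnth.
  by rewrite -rangeW => -[t _ Wt]; exists t; rewrite //= Wt.
have range_fin : finite_set (range (g \o W)).
  by rewrite -(image_comp W g setT) rangeW; exact/finite_image/finite_seq.
rewrite /entropy fsbig_finite //; under eq_bigr do rewrite pmf_comp.
have -> : \sum_(v <- finmap.enum_fset (fset_set (range (g \o W))))
    mass pmf_weight G v * log2 (mass pmf_weight G v)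
    = \sum_o pmf_weight o * log2 (mass pmf_weight G (G o)).
  transitivity (\sum_(v <- finmap.enum_fset (fset_set (range (g \o W))))
      \sum_o (G o == v)%:R * (pmf_weight o * log2 (mass pmf_weight G v))).
    apply: eq_bigr => v _; rewrite {1}/mass mulr_suml; apply: eq_bigr => o _.
    by rewrite mulrA.
  rewrite exchange_big; apply: eq_bigr => o _.
  rewrite (big_rem (G o)) /= ?eqxx ?mul1r; last by rewrite in_fset_set // inE.
  rewrite big1_seq ?addr0 // => v /andP[_ vr].
  have : v != G o by apply: contraTneq vr => ->; rewrite mem_rem_uniqF ?finmap.fset_uniq.
  by rewrite eq_sym => /negbTE ->; rewrite mul0r.
rewrite /ent /log2 mulNr mulr_suml; congr (- _); apply: eq_bigr => o _.
by rewrite mulrA.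
Qed.
End FiniteTransfer.

Lemma entropy_diff_le_carry (R : realType) (d : measure_display) (T : measurableType d)
    (P : probability T R) (U : choiceType) (W : T -> U) (V : zmodType)
    (A B S D : U -> V) (c : V) :
  finite_set (range W) -> (forall u, measurable (W @^-1` [set u])) ->
  (forall t, D (W t) = A (W t) - B (W t) \/ D (W t) = A (W t) - B (W t) - c) ->
  (forall t, S (W t) = A (W t) + B (W t) \/ S (W t) = A (W t) + B (W t) + c) ->
  entropy P (D \o W) <= 3 * entropy P (S \o W) + 4 * entropy P (A \o W)
    + 4 * entropy P (B \o W) - 5 * entropy P ((fun u => (A u, B u)) \o W) + 4.
Proof.
move=> /finite_seqP[s rangeW] W_fiber DE SE.
have {}rangeW : range W = [set` undup s].
  by rewrite rangeW; apply/seteqP; split => u /=; rewrite mem_undup.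
set w := pmf_weight P W (S := undup s).
have w_ge0 o : 0 <= w o := pmf_weight_ge0 P W o.
have w_sum1 : \sum_o w o = 1 := pmf_weight_sum1 P (undup_uniq s) rangeW W_fiber.
rewrite !(entropy_comp P (undup_uniq s) rangeW W_fiber) -/w.
set u := tnth (in_tuple (undup s)).
have u_range o : exists t, W t = u o.
  have : [set` undup s] (u o) by exact: mem_tnth.
  by rewrite -rangeW => -[t _ Wt]; exists t.
have carry_le := @ent_diff_le_carry _ _ _ _ (A \o u) (B \o u) (S \o u) (D \o u) c w_ge0 w_sum1
  ltac:(by move=> o /=; have [t <-] := u_range o; exact: DE)
  ltac:(by move=> o /=; have [t <-] := u_range o; exact: SE).
have ln2_gt0 : 0 < ln (2 : R) by rewrite ln_gt0 // ltr1n.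
have invln2_ge0 : 0 <= (ln 2 : R)^-1 by rewrite invr_ge0 ltW.
have := ler_wpM2r invln2_ge0 carry_le.
have := divff (lt0r_neq0 ln2_gt0).
rewrite /comp; lra.
Qed.

Lemma floorD_carry (R : archiRealDomainType) (x y : R) :
  Num.floor (x + y) = Num.floor x + Num.floor y \/
  Num.floor (x + y) = Num.floor x + Num.floor y + 1.
Proof.
have /andP[x_ge x_lt] := floor_itv x; have /andP[y_ge y_lt] := floor_itv y.
move: x_lt y_lt; rewrite !intrD => x_lt y_lt.
have [lt|ge] := ltP (x + y) (Num.floor x + Num.floor y + 1)%:~R.
  by left; apply: floor_def; move: lt; rewrite !intrD; lra.
by right; apply: floor_def; move: ge; rewrite !intrD; lra.
Qed.

Lemma floorB_carry (R : archiRealDomainType) (x y : R) :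
  Num.floor (x - y) = Num.floor x - Num.floor y \/
  Num.floor (x - y) = Num.floor x - Num.floor y - 1.
Proof.
have /andP[x_ge x_lt] := floor_itv x; have /andP[y_ge y_lt] := floor_itv y.
move: x_lt y_lt; rewrite !intrD => x_lt y_lt.
have [ge|lt] := leP (Num.floor x - Num.floor y)%:~R (x - y).
  by left; apply: floor_def; move: ge; rewrite ?intrD ?intrN ?intrB; lra.
by right; apply: floor_def; move: lt; rewrite ?intrD ?intrN ?intrB; lra.
Qed.

Lemma dyadicD_carry (R : realType) n (x y : R) :
  dyadic n (x + y) = dyadic n x + dyadic n y \/
  dyadic n (x + y) = dyadic n x + dyadic n y + (2 ^+ n)^-1.
Proof.
rewrite /dyadic mulrDr.
by case: (floorD_carry (2 ^+ n * x) (2 ^+ n * y)) => ->; [left | right]; rewrite !intrD !mulrDl ?mul1r.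
Qed.

Lemma dyadicB_carry (R : realType) n (x y : R) :
  dyadic n (x - y) = dyadic n x - dyadic n y \/
  dyadic n (x - y) = dyadic n x - dyadic n y - (2 ^+ n)^-1.
Proof.
rewrite /dyadic mulrBr.
by case: (floorB_carry (2 ^+ n * x) (2 ^+ n * y)) => ->; [left | right]; rewrite !intrB !mulrBl ?mul1r.
Qed.

Lemma finite_range_pair (T U1 U2 : Type) (f : T -> U1) (g : T -> U2) :
  finite_set (range f) -> finite_set (range g) -> finite_set (range (fun t => (f t, g t))).
Proof.
move=> f_fin g_fin; apply: sub_finite_set (finite_setX f_fin g_fin).
by move=> _ [t _ <-]; split; exists t.
Qed.

Lemma measurable_fiber_pair (d : measure_display) (T : measurableType d) (U1 U2 : Type)
    (f : T -> U1) (g : T -> U2) :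
  (forall u, measurable (f @^-1` [set u])) -> (forall u, measurable (g @^-1` [set u])) ->
  forall u, measurable ((fun t => (f t, g t)) @^-1` [set u]).
Proof.
move=> f_fiber g_fiber [u1 u2].
have -> : (fun t => (f t, g t)) @^-1` [set (u1, u2)] = f @^-1` [set u1] `&` g @^-1` [set u2].
  by apply/seteqP; split => t /=; [case=> -> -> | case=> -> ->].
exact: measurableI.
Qed.

Lemma measurable_dyadic_fiber (R : realType) (d : measure_display) (T : measurableType d)
    (Z : T -> R) n (u : R) :
  measurable_fun setT Z -> measurable ((fun t => dyadic n (Z t)) @^-1` [set u]).
Proof.
move=> Z_meas.
have scaled_meas : measurable_fun setT (fun t => 2 ^+ n * Z t).
  exact: measurable_realfun.measurable_funM (measurable_cst (2 ^+ n : R)) Z_meas.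
set k := Num.floor (2 ^+ n * u).
have pow2_neq0 : (2 ^+ n : R) != 0 by rewrite expf_neq0 // pnatr_eq0.
have -> : (fun t => dyadic n (Z t)) @^-1` [set u] =
    (fun t => 2 ^+ n * Z t) @^-1` `[(k%:~R : R), (k + 1)%:~R[%classic
    `&` [set _ | u = k%:~R / 2 ^+ n].
  apply/seteqP; split => t /=.
  - move=> Zt; have k_floor : k = Num.floor (2 ^+ n * Z t).
      by rewrite /k -Zt /dyadic [2 ^+ n * _]mulrC divfK // intrKfloor.
    by split; [rewrite in_itv /= k_floor floor_itv | rewrite -Zt k_floor].
  - by rewrite in_itv /= => -[k_itv ->]; rewrite /dyadic (floor_def k_itv).
apply: measurableI.
  by rewrite -[X in measurable X]setTI; apply: scaled_meas => //; exact: measurable_itv.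
have [u_eq|u_neq] := pselect (u = k%:~R / 2 ^+ n).
  by rewrite (_ : [set _ | _] = setT) //; apply/seteqP; split.
by rewrite (_ : [set _ | _] = set0) //; apply/seteqP; split.
Qed.

Lemma finite_range_dyadic (R : realType) (T : Type) (Z : T -> R) n (M : R) :
  (forall t, `|Z t| <= M) -> finite_set (range (fun t => dyadic n (Z t))).
Proof.
move=> Z_le.
set m := Num.floor (2 ^+ n * M); set N : nat := (`|m|%N).+1.
apply: (@sub_finite_set _ _ ((fun k : int => k%:~R / 2 ^+ n) @`
    [set` [seq (i%:Z - N%:Z) | i <- iota 0 (N + N).+1]])); last first.
  exact/finite_image/finite_seq.
move=> _ [t _ <-]; exists (Num.floor (2 ^+ n * Z t)) => //.
have pow2_ge0 : (0 : R) <= 2 ^+ n by rewrite exprn_ge0.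
have M_ge0 : 0 <= M by apply: le_trans (Z_le t).
have /andP[_ M_lt] := floor_itv (2 ^+ n * M); rewrite -/m in M_lt.
have m_ge0 : 0 <= m by rewrite /m floor_ge0 mulr_ge0.
have k_le : Num.floor (2 ^+ n * Z t) <= m.
  by apply: le_floor; rewrite ler_wpM2l // (le_trans (ler_norm _) (Z_le t)).
have k_ge : - m - 1 <= Num.floor (2 ^+ n * Z t).
  rewrite floor_ge_int.
  have : - M <= Z t by have := Z_le t; rewrite ler_norml => /andP[].
  move=> ge; have : - (2 ^+ n * M) <= 2 ^+ n * Z t by rewrite -mulrN ler_wpM2l.
  move: M_lt; rewrite ?intrD ?intrN ?intrB; lra.
set k := Num.floor (2 ^+ n * Z t) in k_le k_ge *.
apply/mapP; exists (absz (k + N%:Z)%R); first by rewrite mem_iota /= add0n; lia.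
lia.
Qed.

Theorem mainTheorem8 (R : realType) :
  exists K : R,
  forall (d : measure_display) (T : measurableType d) (P : probability T R)
         (X Y : T -> R),
    measurable_fun setT X -> measurable_fun setT Y ->
    (exists M : R, forall t, `|X t| <= M) ->
    (exists M : R, forall t, `|Y t| <= M) ->
    forall n : nat,
      Hn P n (fun t => X t - Y t)
      <= 3 * Hn P n (fun t => X t + Y t) + 4 * Hn P n X + 4 * Hn P n Y
         - 5 * Hn2 P n X Y + K.
Proof.
exists 4 => d T P X Y X_meas Y_meas [MX X_le] [MY Y_le] n.
have XpY_le t : `|X t + Y t| <= MX + MY by rewrite (le_trans (ler_normD _ _)) ?lerD.
have XmY_le t : `|X t - Y t| <= MX + MY by rewrite (le_trans (ler_normB _ _)) ?lerD.
have XpY_meas := measurable_realfun.measurable_funD X_meas Y_meas.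
have XmY_meas := measurable_realfun.measurable_funB X_meas Y_meas.
pose W t := (dyadic n (X t), dyadic n (Y t), dyadic n (X t + Y t), dyadic n (X t - Y t)).
have W_fin : finite_set (range W).
  by rewrite /W; repeat apply: (finite_range_pair (f := fun t => _) (g := fun t => _)); apply: finite_range_dyadic;
    [exact: X_le | exact: Y_le | exact: XpY_le | exact: XmY_le].
have W_fiber : forall u, measurable (W @^-1` [set u]).
  by rewrite /W; repeat apply: (measurable_fiber_pair (f := fun t => _) (g := fun t => _)) => ?; exact: measurable_dyadic_fiber.
exact: (entropy_diff_le_carry P (A := fun u => u.1.1.1) (B := fun u => u.1.1.2)
  (S := fun u => u.1.2) (D := fun u => u.2) W_fin W_fiber
  (fun t => dyadicB_carry n (X t) (Y t)) (fun t => dyadicD_carry n (X t) (Y t))).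
Qed.
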